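(* Let $(\mathfrak J,B,\omega)$ be a symplectic pseudo-euclidean Jordan algebra over an algebraically closed field $\mathbb K$ (of characteristic zero). Then there exist two subalgebras $\mathcal U$ and $\mathcal V$ of $\mathfrak J$ such that $(\mathfrak J=\mathcal U\oplus\mathcal V,B,\omega)$ is a symplectic Jordan-Manin algebra.
   Context: All algebras are finite-dimensional. A Jordan algebra is a commutative algebra with $x(yx^2)=(xy)x^2$; $(\mathfrak J,B)$ is pseudo-euclidean if $B$ is nondegenerate symmetric with $B(xy,z)=B(x,yz)$. A symplectic form is a nondegenerate skew-symmetric bilinear $\omega$ with $\omega(xy,z)+\omega(yz,x)+\omega(zx,y)=0$. A Jordan-Manin algebra is a pseudo-euclidean Jordan algebra $(\mathfrak J,B)$ with $\mathfrak J=\mathcal U\oplus\mathcal V$ (vector space direct sum) for two subalgebras $\mathcal U,\mathcal V$ that are totally isotropic for $B$. It is a symplectic Jordan-Manin algebra if moreover it carries a symplectic form $\omega$ with $\omega(\mathcal U,\mathcal U)=\omega(\mathcal V,\mathcal V)=\{0\}$. *)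

From HB Require Import structures.
From mathcomp Require Import all_boot all_order all_algebra.
Set Implicit Arguments. Unset Strict Implicit. Unset Printing Implicit Defensive.
Import GRing.Theory.
Local Open Scope ring_scope.

Section JordanDefs.
Variables (K : fieldType) (V : vectType K).

Definition bilinear_product (mul : V -> V -> V) : Prop :=
  (forall (a : K) (x y z : V), mul (a *: x + y) z = a *: mul x z + mul y z) /\
  (forall (a : K) (x y z : V), mul x (a *: y + z) = a *: mul x y + mul x z).

Definition bilinear_form (B : V -> V -> K) : Prop :=
  (forall (a : K) (x y z : V), B (a *: x + y) z = a * B x z + B y z) /\
  (forall (a : K) (x y z : V), B x (a *: y + z) = a * B x y + B x z).

Definition jordan_algebra (mul : V -> V -> V) : Prop :=
  [/\ bilinear_product mul,
      (forall x y, mul x y = mul y x) &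
      (forall x y, mul x (mul y (mul x x)) = mul (mul x y) (mul x x))].

Definition nondegenerate (B : V -> V -> K) : Prop :=
  forall x, (forall y, B x y = 0) -> x = 0.

Definition pseudo_euclidean (mul : V -> V -> V) (B : V -> V -> K) : Prop :=
  [/\ bilinear_form B, (forall x y, B x y = B y x), nondegenerate B &
      (forall x y z, B (mul x y) z = B x (mul y z))].

Definition symplectic_form (mul : V -> V -> V) (w : V -> V -> K) : Prop :=
  [/\ bilinear_form w, (forall x y, w x y = - w y x), nondegenerate w &
      (forall x y z, w (mul x y) z + w (mul y z) x + w (mul z x) y = 0)].

Definition subalgebra (mul : V -> V -> V) (U : {vspace V}) : Prop :=
  forall x y, x \in U -> y \in U -> mul x y \in U.

Definition totally_isotropic (B : V -> V -> K) (U : {vspace V}) : Prop :=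
  forall x y, x \in U -> y \in U -> B x y = 0.

Definition vs_direct_sum (U W : {vspace V}) : Prop :=
  (U + W = fullv)%VS /\ (U :&: W = 0)%VS.

Definition jordan_manin (mul : V -> V -> V) (B : V -> V -> K)
  (U W : {vspace V}) : Prop :=
  [/\ jordan_algebra mul, pseudo_euclidean mul B, vs_direct_sum U W,
      subalgebra mul U /\ subalgebra mul W &
      totally_isotropic B U /\ totally_isotropic B W].

Definition symplectic_jordan_manin (mul : V -> V -> V) (B w : V -> V -> K)
  (U W : {vspace V}) : Prop :=
  [/\ jordan_manin mul B U W, symplectic_form mul w,
      totally_isotropic w U & totally_isotropic w W].

End JordanDefs.

(* Nondegeneracy of B gives a matrix D with w(x, y) = B(xD, y).  The cyclic
   identity makes D a derivation of the commutative product, skew-symmetry of w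
   makes D skew-adjoint for B, and nondegeneracy of w makes D invertible.  Hence
   for the generalized eigenspaces J_a of D we get J_a J_b <= J_(a+b), and
   B(J_a, J_b) = w(J_a, J_b) = 0 unless a + b = 0.  Embedding the Q-span of the
   (nonzero) spectrum of D into Q^k and ordering Q^k lexicographically splits the
   spectrum into two halves, each closed under the sums that are eigenvalues and
   containing no pair a, -a; the sums of the J_a over either half are U and W. *)

From Pilot Require Import Defs.
From HB Require Import structures.
From mathcomp Require Import all_boot all_order all_algebra sesquilinear.
From Stdlib Require Import Classical.
Set Implicit Arguments. Unset Strict Implicit. Unset Printing Implicit Defensive.
Import Order.TTheory GRing.Theory Num.Theory.
Local Open Scope ring_scope.

Section RatrPchar0.
Variable K : fieldType.
Hypothesis char0 : [pchar K] =i pred0.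

Lemma pchar0_intr_eq0 (z : int) : (z%:~R == 0 :> K) = (z == 0).
Proof.
have natr_eq0 k : (k%:R == 0 :> K) = (k == 0)%N by apply: (pcharf0P K).1.
by case: z => k; rewrite ?NegzE ?mulrNz ?oppr_eq0 natr_eq0.
Qed.

Let denr_neq0 (x : rat) : (denq x)%:~R != 0 :> K.
Proof. by rewrite pchar0_intr_eq0 denq_neq0. Qed.

Lemma pchar0_ratrD (x y : rat) : ratr (x + y) = ratr x + ratr y :> K.
Proof.
apply: (canLR (mulfK (denr_neq0 _))); apply: (mulIf (denr_neq0 x)).
rewrite mulrAC mulrDl divfK // mulrAC -!rmorphM.
apply: (mulIf (denr_neq0 y)); rewrite mulrAC mulrDl divfK //.
rewrite -!(rmorphM, rmorphD); congr _%:~R; apply: (@intr_inj rat).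
rewrite !(rmorphM, rmorphD) /= [_ + _]lock /= -lock !numqE.
by rewrite (mulrAC y) -!mulrDl -mulrA mulrAC !mulrA.
Qed.

Lemma pchar0_ratrM (x y : rat) : ratr (x * y) = ratr x * ratr y :> K.
Proof.
rewrite /ratr mulrC mulrAC; apply: canLR (mulKf (denr_neq0 _)) _; rewrite !mulrA.
do 2!apply: canRL (mulfK (denr_neq0 _)) _; rewrite -!rmorphM; congr _%:~R.
apply: (@intr_inj rat); rewrite !rmorphM [x * y]lock /= !numqE -lock.
by rewrite -!mulrA mulrA mulrCA -!mulrA (mulrCA y).
Qed.

End RatrPchar0.

Lemma rowspace_of_subspace (F : fieldType) m (P : 'rV[F]_m -> Prop) :
  P 0 -> (forall a u v, P u -> P v -> P (a *: u + v)) ->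
  exists M : 'M[F]_m, forall u, (u <= M)%MS <-> P u.
Proof.
move=> P0 Plin.
have PD u v : P u -> P v -> P (u + v) by move=> Pu Pv; rewrite -[u]scale1r; apply: Plin.
have PZ a u : P u -> P (a *: u) by move=> Pu; rewrite -[_ *: _]addr0; apply: Plin.
have grow k : exists M : 'M[F]_m, (forall u, (u <= M)%MS -> P u) /\
    ((k <= \rank M)%N \/ forall u, P u -> (u <= M)%MS).
  elim: k => [|k [M [sMP [rkM | sPM]]]].
  - by exists 0; split; [move=> u; rewrite submx0 => /eqP -> | left].
  - case: (classic (exists c, P c /\ ~~ (c <= M)%MS)) => [[c [Pc cM]] | sPM]; last first.
      exists M; split=> //; right=> u Pu; apply/negPn/negP => uM.
      by apply: sPM; exists u.
    exists (M + c)%MS; split.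
      move=> u /sub_addsmxP[[x y] /= ->]; apply: PD; first exact/sMP/submxMl.
      by rewrite (mx11_scalar y) mul_scalar_mx; apply: PZ.
    left; apply: leq_ltn_trans rkM (rank_ltmx _).
    rewrite ltmxE addsmxSl /=; apply: contraNN cM.
    exact: submx_trans (addsmxSr M c).
  - by exists M; split=> //; right.
have [M [sMP [rkM | sPM]]] := grow m.+1; last by exists M => u; split=> [/sMP|/sPM].
by have := rank_leq_col M; rewrite leqNgt rkM.
Qed.

Section LexPositive.
Variables (F : realDomainType) (m : nat).
Implicit Types u v : 'rV[F]_m.

Definition lexpos v : bool :=
  [exists i : 'I_m, [forall j : 'I_m, (j < i)%N ==> (v 0 j == 0)] && (0 < v 0 i)].

Lemma lexposP v : reflect
  (exists i : 'I_m, (forall j : 'I_m, (j < i)%N -> v 0 j = 0) /\ 0 < v 0 i) (lexpos v).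
Proof.
apply: (iffP existsP) => [[i /andP[/forallP v0 vi]]|[i [v0 vi]]]; exists i.
  by split=> // j ji; apply/eqP/(implyP (v0 j)).
by rewrite vi andbT; apply/forallP => j; apply/implyP => /v0 ->.
Qed.

Lemma lexpos0 : ~~ lexpos 0.
Proof. by apply/lexposP => -[i [_]]; rewrite mxE ltxx. Qed.

Lemma lexposD u v : lexpos u -> lexpos v -> lexpos (u + v).
Proof.
move=> /lexposP[i [u0 ui]] /lexposP[k [v0 vk]]; apply/lexposP.
have [ik | ki] := leqP i k.
  exists i; split=> [j ji|]; first by rewrite mxE u0 ?v0 ?addr0 //; apply: leq_trans ik.
  rewrite mxE ltr_pwDl //.
  by move: ik; rewrite leq_eqVlt => /orP[/eqP/val_inj-> | /v0->]; rewrite ?(ltW vk).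
exists k; split=> [j jk|]; first by rewrite mxE u0 ?v0 ?addr0 //; apply: ltn_trans ki.
by rewrite mxE u0 ?add0r.
Qed.

Lemma lexposN v : v != 0 -> lexpos (- v) = ~~ lexpos v.
Proof.
move=> nz_v; apply/idP/idP => [Nv | NNv].
  by apply: contraNN lexpos0 => pv; rewrite -(addNr v) lexposD.
have [i vi] : exists i : 'I_m, v 0 i != 0.
  apply/existsP; apply: contraNT nz_v => /existsPn v0; apply/eqP/rowP => j.
  by move: (v0 j); rewrite negbK mxE => /eqP.
have [k v0k kmin] := @arg_minnP _ i (fun j => v 0 j != 0) val vi.
have v0 (j : 'I_m) : (j < k)%N -> v 0 j = 0.
  by move=> jk; apply/eqP; apply: contraTT jk => /kmin; rewrite -leqNgt.
move: v0k; rewrite neq_lt => /orP[vk | vk]; last first.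
  by case/negP: NNv; apply/lexposP; exists k.
by apply/lexposP; exists k; split=> [j /v0|]; rewrite mxE ?oppr_gt0 // => ->; rewrite oppr0.
Qed.

End LexPositive.

Definition positive_half (G : zmodType) (s : seq G) (P : pred G) : Prop :=
  {in s &, forall a b, P a -> P b -> a + b != 0 /\ (a + b \in s -> P (a + b))}.

Section RationalEmbedding.
Variable K : fieldType.
Hypothesis char0 : [pchar K] =i pred0.
Variable s : seq K.
Local Notation m := (size s).

Definition rat_comb (c : 'rV[rat]_m) : K := \sum_(i < m) ratr (c 0 i) * s`_i.

Lemma rat_combD c d : rat_comb (c + d) = rat_comb c + rat_comb d.
Proof.
rewrite /rat_comb -big_split; apply: eq_bigr => i _.
by rewrite mxE pchar0_ratrD // mulrDl.
Qed.

Lemma rat_combZ a c : rat_comb (a *: c) = ratr a * rat_comb c.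
Proof.
by rewrite /rat_comb mulr_sumr; apply: eq_bigr => i _; rewrite mxE pchar0_ratrM // mulrA.
Qed.

Lemma rat_combB c d : rat_comb (c - d) = rat_comb c - rat_comb d.
Proof. by rewrite -[in X in _ = X - _](subrK d c) (rat_combD (c - d)) addrK. Qed.

(* This is the zero row when [a \notin s], since then [index a s = m]. *)
Definition rat_coord (a : K) : 'rV[rat]_m := \row_(i < m) (i == index a s :> nat)%:R.

Lemma rat_coordK a : a \in 0 :: s -> rat_comb (rat_coord a) = a.
Proof.
have -> : rat_comb (rat_coord a) = \sum_(i < m | i == index a s :> nat) s`_i.
  by rewrite big_mkcond; apply: eq_bigr => i _; rewrite mxE ratr_nat mulr_natl mulrb.
rewrite big_ord1_eq index_mem inE => /predU1P[-> | sa]; last by rewrite sa nth_index.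
by case: ifP => // /(nth_index 0).
Qed.

Lemma rat_embedding : exists (k : nat) (phi : K -> 'rV[rat]_k),
  {in 0 :: s, forall a, (phi a == 0) = (a == 0)} /\
  {in 0 :: s & &, forall a b c, a + b = c -> phi a + phi b = phi c}.
Proof.
have rat_comb0 : rat_comb 0 = 0 by rewrite -[0 in LHS](subrr 0) rat_combB subrr.
have rat_comb_closed a u v :
    rat_comb u = 0 -> rat_comb v = 0 -> rat_comb (a *: u + v) = 0.
  by move=> u0 v0; rewrite rat_combD rat_combZ u0 v0 mulr0 addr0.
have [M relM] := rowspace_of_subspace rat_comb0 rat_comb_closed.
(* Right multiplication by [cokermx M] has kernel M, the relations among s. *)
exists m, (fun a => rat_coord a *m cokermx M); split=> [a sa | a b c sa sb sc abc].
  rewrite -submxE; apply/idP/eqP => [/relM | ->]; first by rewrite rat_coordK.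
  by apply/relM; rewrite rat_coordK ?mem_head.
apply/eqP; rewrite -subr_eq0 -!mulmxDl -mulNmx -mulmxDl -submxE; apply/relM.
by rewrite rat_combB rat_combD !rat_coordK // abc subrr.
Qed.

End RationalEmbedding.

Lemma positive_half_lexpos (K : fieldType) k (s : seq K) (psi : K -> 'rV[rat]_k) :
  psi 0 = 0 -> {in 0 :: s & &, forall a b c, a + b = c -> psi a + psi b = psi c} ->
  positive_half s (fun a => lexpos (psi a)).
Proof.
move=> psi0 psiD a b sa sb pa pb.
have [sa' sb'] : a \in 0 :: s /\ b \in 0 :: s by rewrite !inE sa sb !orbT.
split=> [|sab]; last by rewrite -(psiD a b) ?lexposD // inE sab orbT.
apply: contraNneq (@lexpos0 rat k) => ab0.
by rewrite -psi0 -(psiD a b 0) ?lexposD ?mem_head.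
Qed.

Lemma exists_positive_half_split (K : fieldType) (s : seq K) :
  [pchar K] =i pred0 -> 0 \notin s ->
  exists P : pred K, positive_half s P /\ positive_half s (predC P).
Proof.
move=> char0 s0; have [k [phi [phi0 phiD]]] := rat_embedding char0 s.
have phi00 : phi 0 = 0 by apply/eqP; rewrite phi0 ?mem_head.
have phi_neq0 a : a \in s -> phi a != 0.
  by move=> sa; rewrite phi0 ?inE ?sa ?orbT //; apply: contraNneq s0 => <-.
exists (fun a => lexpos (phi a)); split; first exact: positive_half_lexpos.
have : positive_half s (fun a => lexpos (- phi a)).
  apply: positive_half_lexpos => [|a b c sa sb sc abc]; first by rewrite phi00 oppr0.
  by rewrite -(phiD a b c) // opprD.
move=> halfN a b sa sb /= Pa Pb; rewrite -!lexposN ?phi_neq0 // in Pa Pb.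
have [ab0 abP] := halfN a b sa sb Pa Pb; split=> // sab.
by rewrite -lexposN ?phi_neq0 //; apply: abP.
Qed.

(* [sesquilinear] also defines a [nondegenerate], hence the qualified names below. *)
Lemma biscalar_gram (K : fieldType) n (f : {biscalar 'rV[K]_n}) u v :
  f u v = (u *m matrix_of_form f *m v^T) 0 0.
Proof.
by rewrite -(matrix_of_formK (theta := idfun) f) /form_of_matrix trace_mx11 map_mx_id.
Qed.

Lemma nondegenerate_gram_unit (K : fieldType) n (f : {biscalar 'rV[K]_n}) :
  Defs.nondegenerate f -> matrix_of_form f \in unitmx.
Proof.
move=> f_nd; rewrite -row_free_unit -kermx_eq0; apply/rowV0P => u /sub_kermxP uG0.
by apply: f_nd => v; rewrite biscalar_gram uG0 mul0mx mxE.
Qed.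

Lemma coprimep_prod_XsubC (K : fieldType) (r : seq K) (P : pred K) q :
  {in r, forall z, P z -> ~~ root q z} ->
  coprimep (\prod_(z <- r | P z) ('X - z%:P)) q.
Proof.
move=> r_q; rewrite big_seq_cond.
apply: (big_ind (fun p => coprimep p q)) => [|p1 p2 c1 c2|z /andP[rz Pz]].
- exact: coprime1p.
- by rewrite coprimepMl c1 c2.
- by rewrite coprimep_sym coprimep_XsubC r_q.
Qed.

Definition spectral_part (K : fieldType) (s : seq K) (P : pred K) : {poly K} :=
  \prod_(z <- s | P z) ('X - z%:P).

Lemma root_spectral_part (K : fieldType) (s : seq K) P t :
  root (spectral_part s P) t = P t && (t \in s).
Proof. by rewrite /spectral_part -big_filter root_prod_XsubC mem_filter. Qed.

Lemma coprime_spectral_partC (K : fieldType) (s : seq K) P :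
  coprimep (spectral_part s P) (spectral_part s (predC P)).
Proof.
by apply: coprimep_prod_XsubC => z sz Pz; rewrite root_spectral_part /= Pz.
Qed.

Lemma unitmx_char_poly_root0 (K : fieldType) n (A : 'M[K]_n) :
  A \in unitmx -> ~~ root (char_poly A) 0.
Proof.
rewrite -eigenvalue_root_char /eigenvalue /eigenspace raddf0 subr0 negbK.
by rewrite kermx_eq0 row_free_unit.
Qed.

Section HornerCoprime.
Variables (K : fieldType) (n : nat) (A : 'M[K]_n.+1).

Lemma horner_mx_XsubCX c k : horner_mx A (('X - c%:P) ^+ k) = (A - c%:M) ^+ k.
Proof. by rewrite rmorphXn rmorphB /= horner_mx_X horner_mx_C. Qed.

Lemma horner_mx_coprime_row q h (y : 'rV_n.+1) : coprimep q h ->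
  y *m horner_mx A q = 0 -> exists z, y = z *m horner_mx A h.
Proof.
move=> /Bezout_eq1_coprimepP[[u v] /= uv1] yq0; exists (y *m horner_mx A v).
move: (congr1 (mulmx y \o horner_mx A) uv1) => /=.
by rewrite rmorph1 mulmx1 rmorphD mulmxDr [u * q]mulrC !rmorphM /= !mulmxA yq0 mul0mx add0r.
Qed.

Lemma horner_mx_coprime_ker p q h (y : 'rV_n.+1) :
  coprimep q h -> horner_mx A (p * h) = 0 ->
  y *m horner_mx A q = 0 -> y *m horner_mx A p = 0.
Proof.
move=> qh ph0 /(horner_mx_coprime_row qh)[z ->].
by rewrite -mulmxA mulmxE -rmorphM mulrC /= ph0 mulmx0.
Qed.

Lemma kermx_prod_XsubC (r : seq K) (x : 'rV_n.+1) :
  x *m horner_mx A (\prod_(z <- r) ('X - z%:P)) = 0 ->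
  exists x_ : 'I_(size (undup r)) -> 'rV_n.+1, x = \sum_i x_ i /\
    forall i, x_ i *m (A - ((undup r)`_i)%:M) ^+ count_mem (undup r)`_i r = 0.
Proof.
set E := undup r; pose p_ (i : 'I_(size E)) := ('X - (E`_i)%:P) ^+ count_mem E`_i r.
have -> : \prod_(z <- r) ('X - z%:P) = \prod_i p_ i.
  rewrite -big_undup_iterop_count (big_nth 0) big_mkord.
  by apply: eq_bigr.
have cop : {in predT &, forall i j, j != i -> coprimep (p_ i) (p_ j)}.
  move=> i j _ _ ji; rewrite coprimep_expl ?coprimep_expr // coprimep_XsubC root_XsubC.
  by rewrite nth_uniq ?undup_uniq // eq_sym.
move=> /sub_kermxP; rewrite -[kermx _]/(kermxpoly A _) (kermxpoly_prod A cop).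
move=> /sub_sumsmxP[y_ ->]; exists (fun i => y_ i *m kermxpoly A (p_ i)); split=> // i.
by rewrite -horner_mx_XsubCX -mulmxA mulmx_ker mulmx0.
Qed.

Section SplitCharPoly.
Variable s : seq K.
Hypothesis char_poly_s : char_poly A = \prod_(z <- s) ('X - z%:P).

Lemma horner_mx_spectral_partC P :
  horner_mx A (spectral_part s P * spectral_part s (predC P)) = 0.
Proof.
have -> : spectral_part s P * spectral_part s (predC P) = char_poly A.
  by rewrite char_poly_s (bigID P).
exact: Cayley_Hamilton.
Qed.

Lemma spectral_parts_direct P :
  (kermxpoly A (spectral_part s P) + kermxpoly A (spectral_part s (predC P)) :=: 1%:M)%MS
  /\ (kermxpoly A (spectral_part s P) :&: kermxpoly A (spectral_part s (predC P)))%MS = 0.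
Proof.
split; last exact: (mxdirect_kermxpoly A (coprime_spectral_partC s P)).
apply: eqmx_trans (eqmx_sym (kermxpolyM A (coprime_spectral_partC s P))) _.
by rewrite /kermxpoly horner_mx_spectral_partC; apply: kermx0.
Qed.

End SplitCharPoly.

End HornerCoprime.

Definition isotropic_subalgebra_mx (K : fieldType) n (mul : 'rV[K]_n -> 'rV_n -> 'rV_n)
    (B w : 'rV_n -> 'rV_n -> K) (M : 'M_n) :=
  forall u v, (u <= M)%MS -> (v <= M)%MS -> [/\ (mul u v <= M)%MS, B u v = 0 & w u v = 0].

Section SkewDerivation.
Variables (K : fieldType) (n : nat).
Local Notation rV := 'rV[K]_n.+1.
Variables (mul : {bilinear rV -> rV -> rV}) (B w : {biscalar rV}).
Hypothesis mulC : forall u v, mul u v = mul v u.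
Hypothesis BC : forall u v, B u v = B v u.
Hypothesis B_nd : Defs.nondegenerate B.
Hypothesis B_invariant : forall u v z, B (mul u v) z = B u (mul v z).
Hypothesis w_skew : forall u v, w u v = - w v u.
Hypothesis w_nd : Defs.nondegenerate w.
Hypothesis w_cyclic : forall u v z, w (mul u v) z + w (mul v z) u + w (mul z u) v = 0.

(* Locked, so that rewriting with [mulmxA] cannot unfold the product. *)
Fact skew_der_key : unit. Proof. exact: tt. Qed.
Definition skew_der : 'M[K]_n.+1 :=
  locked_with skew_der_key (matrix_of_form w *m invmx (matrix_of_form B)).
Local Notation D := skew_der.

Lemma B_skew_der u v : B (u *m D) v = w u v.
Proof.
by rewrite !biscalar_gram /skew_der unlock !mulmxA mulmxKV ?nondegenerate_gram_unit.
Qed.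

Lemma skew_der_unit : D \in unitmx.
Proof. by rewrite /skew_der unlock unitmx_mul unitmx_inv !nondegenerate_gram_unit. Qed.

Lemma skew_derC u v : B (u *m D) v = - B u (v *m D).
Proof. by rewrite B_skew_der w_skew -B_skew_der BC. Qed.

Lemma skew_derM u v : mul u v *m D = mul (u *m D) v + mul u (v *m D).
Proof.
apply/eqP; rewrite -subr_eq0; apply/eqP/B_nd => z.
rewrite linearBl linearDl /= (mulC u (v *m D)) !B_invariant !B_skew_der.
have := w_cyclic u v z; rewrite (w_skew (mul v z)) (w_skew (mul z u)) (mulC z u).
by rewrite opprD addrA.
Qed.

Local Notation hD := (horner_mx D).

Lemma B_horner_mx q x z : B x (z *m hD q) = B (x *m hD (q \Po - 'X)) z.
Proof.
elim/poly_ind: q x z => [|q c IHq] x z.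
  by rewrite comp_poly0 rmorph0 !mulmx0 linear0r linear0l.
rewrite comp_polyD comp_polyM comp_polyX comp_polyC !rmorphD !rmorphM rmorphN /=.
rewrite !horner_mx_X !horner_mx_C !mulmxDr !mul_mx_scalar linearDr linearDl /=.
rewrite !linearZr !linearZl /= -!mulmxE !mulmxA -[B x _]opprK -skew_derC IHq.
by rewrite mulmxN linearNl -!mulmxA (comm_mx_horner _ (erefl (D *m D))).
Qed.

Lemma B_horner_mx_orthogonal p q x y : coprimep q (p \Po - 'X) ->
  x *m hD p = 0 -> y *m hD q = 0 -> B x y = 0.
Proof.
move=> qp xp0 /(horner_mx_coprime_row qp)[z ->].
rewrite B_horner_mx -comp_polyA raddfN /= comp_polyX opprK comp_polyXr xp0.
exact: linear0l.
Qed.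

Lemma skew_der_leibniz a b x y : mul x y *m (D - (a + b)%:M) =
  mul (x *m (D - a%:M)) y + mul x (y *m (D - b%:M)).
Proof.
rewrite !mulmxBr !mul_mx_scalar skew_derM linearBl linearBr /=.
by rewrite linearZl_LR linearZr_LR scalerDl opprD addrACA.
Qed.

Lemma mul_generalized_eigen a b i j x y :
  x *m (D - a%:M) ^+ i = 0 -> y *m (D - b%:M) ^+ j = 0 ->
  mul x y *m (D - (a + b)%:M) ^+ (i + j) = 0.
Proof.
elim: i j x y => [|i IHi] j x y; first by rewrite mulmx1 => ->; rewrite linear0l mul0mx.
elim: j y => [|j IHj] y xa; first by rewrite mulmx1 => ->; rewrite linear0r mul0mx.
rewrite exprS mulmxA => yb; move: (xa); rewrite exprS mulmxA => xa'.
rewrite addSn exprS mulmxA skew_der_leibniz mulmxDl (IHi j.+1) ?exprS ?mulmxA //.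
by rewrite add0r -addSnnS IHj.
Qed.

Section SpectralHalf.
Variable s : seq K.
Hypothesis char_poly_s : char_poly D = \prod_(z <- s) ('X - z%:P).

Variable P : pred K.
Hypothesis halfP : positive_half s P.
Local Notation U := (spectral_part s P).

Lemma spectral_half_B_isotropic x y : x *m hD U = 0 -> y *m hD U = 0 -> B x y = 0.
Proof.
apply: B_horner_mx_orthogonal; apply: coprimep_prod_XsubC => z sz Pz.
rewrite rootE horner_comp hornerN hornerX -rootE root_spectral_part.
by apply/andP => -[Pz' sz']; have [] := halfP sz sz' Pz Pz'; rewrite subrr eqxx.
Qed.

Lemma spectral_half_w_isotropic x y : x *m hD U = 0 -> y *m hD U = 0 -> w x y = 0.
Proof.
move=> xU0; rewrite -B_skew_der; apply: spectral_half_B_isotropic.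
by rewrite -mulmxA (comm_mx_horner _ (erefl (D *m D))) mulmxA xU0 mul0mx.
Qed.

Lemma spectral_half_mul x y : x *m hD U = 0 -> y *m hD U = 0 -> mul x y *m hD U = 0.
Proof.
set r := [seq z <- s | P z]; set E := undup r.
have decomp z : z *m hD U = 0 -> exists z_ : 'I_(size E) -> rV, z = \sum_i z_ i /\
    forall i, z_ i *m (D - (E`_i)%:M) ^+ count_mem E`_i r = 0.
  by rewrite /spectral_part -big_filter; apply: kermx_prod_XsubC.
have Er (i : 'I_(size E)) : P E`_i && (E`_i \in s).
  by rewrite -mem_filter -mem_undup mem_nth.
move=> /decomp[x_ [-> xE]] /decomp[y_ [-> yE]].
rewrite linear_sumlz mulmx_suml big1 // => i _.
rewrite linear_sum mulmx_suml big1 // => j _.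
have /andP[Pi si] := Er i; have /andP[Pj sj] := Er j.
pose ci := count_mem E`_i r; pose cj := count_mem E`_j r.
apply: (horner_mx_coprime_ker (q := ('X - (E`_i + E`_j)%:P) ^+ (ci + cj))
  _ (horner_mx_spectral_partC char_poly_s P)).
  rewrite coprimep_expl // coprimep_sym coprimep_XsubC root_spectral_part /= negb_and negbK.
  by rewrite orbC -implybE; apply/implyP; case: (halfP si sj Pi Pj).
by rewrite horner_mx_XsubCX mul_generalized_eigen.
Qed.

Lemma isotropic_subalgebra_spectral_part :
  isotropic_subalgebra_mx mul B w (kermxpoly D (spectral_part s P)).
Proof.
move=> u v /sub_kermxP uU /sub_kermxP vU; split.
- by apply/sub_kermxP; apply: spectral_half_mul.
- exact: spectral_half_B_isotropic.
- exact: spectral_half_w_isotropic.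
Qed.

End SpectralHalf.

End SkewDerivation.

Definition pack_bilinear_product (K : fieldType) (V : vectType K) (mul : V -> V -> V)
    (hmul : bilinear_product mul) : {bilinear V -> V -> V} :=
  HB.pack mul (bilinear_isBilinear.Build K V V V *:%R *:%R mul
    (fun z a x y => hmul.1 a x y z, fun x a y z => hmul.2 a x y z)).

Definition pack_bilinear_form (K : fieldType) (V : vectType K) (f : V -> V -> K)
    (hf : bilinear_form f) : {biscalar V} :=
  HB.pack f (bilinear_isBilinear.Build K V V K *%R *%R f
    (fun z a x y => hf.1 a x y z, fun x a y z => hf.2 a x y z)).

Lemma commutative_symplectic_split_mx (K : closedFieldType) n
    (mul : 'rV[K]_n -> 'rV_n -> 'rV_n) (B w : 'rV[K]_n -> 'rV_n -> K) :
  [pchar K] =i pred0 -> bilinear_product mul -> (forall u v, mul u v = mul v u) ->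
  pseudo_euclidean mul B -> symplectic_form mul w ->
  exists U W : 'M_n, [/\ (U + W :=: 1%:M)%MS, (U :&: W)%MS = 0,
    isotropic_subalgebra_mx mul B w U & isotropic_subalgebra_mx mul B w W].
Proof.
move=> char0 hmul mulC [hB BC B_nd B_inv] [hw w_skew w_nd w_cyc].
pose Bb := pack_bilinear_form hB; pose wb := pack_bilinear_form hw.
case: n => [|n] in mul B w hmul mulC hB BC B_nd B_inv hw w_skew w_nd w_cyc Bb wb *.
  have iso0 : isotropic_subalgebra_mx mul B w 0.
    move=> u v _ _; rewrite (thinmx0 (mul u v)) sub0mx (thinmx0 u).
    by rewrite [B 0 v](linear0l Bb) [w 0 v](linear0l wb).
  by exists 0, 0; rewrite !thinmx0.
pose D := skew_der Bb wb.
have [s char_s] : exists s, char_poly D = \prod_(z <- s) ('X - z%:P).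
  have [s ->] := closed_field_poly_normal (char_poly D).
  by exists s; rewrite (monicP (char_poly_monic _)) scale1r.
have s0 : 0 \notin s.
  by rewrite -root_prod_XsubC -char_s unitmx_char_poly_root0 // skew_der_unit.
have [P [halfP halfNP]] := exists_positive_half_split char0 s0.
have [sumUW capUW] := spectral_parts_direct char_s P.
exists (kermxpoly D (spectral_part s P)), (kermxpoly D (spectral_part s (predC P))).
pose mulb := pack_bilinear_product hmul.
by split=> //; apply: (isotropic_subalgebra_spectral_part (mul := mulb)).
Qed.

Import VectorInternalTheory.

Section RowCoordinates.
Variables (K : fieldType) (V : vectType K).
Local Notation rV := 'rV[K]_(dim V).

Definition row_product (mul : V -> V -> V) (u v : rV) : rV := v2r (mul (r2v u) (r2v v)).
Definition row_form (f : V -> V -> K) (u v : rV) : K := f (r2v u) (r2v v).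

Lemma row_product_bilinear mul : bilinear_product mul -> bilinear_product (row_product mul).
Proof.
by move=> [mulL mulR]; split=> a x y z; rewrite /row_product linearP ?mulL ?mulR linearP.
Qed.

Lemma row_form_bilinear f : bilinear_form f -> bilinear_form (row_form f).
Proof. by move=> [fL fR]; split=> a x y z; rewrite /row_form linearP ?fL ?fR. Qed.

Lemma row_form_nondegenerate f : Defs.nondegenerate f -> Defs.nondegenerate (row_form f).
Proof.
move=> f_nd u u0; apply: r2v_inj; rewrite linear0; apply: f_nd => y.
by rewrite -(v2rK y); apply: u0.
Qed.

Lemma row_pseudo_euclidean mul B :
  pseudo_euclidean mul B -> pseudo_euclidean (row_product mul) (row_form B).
Proof.
case=> hB BC B_nd B_inv; split; first exact: row_form_bilinear.
- by move=> u v; apply: BC.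
- exact: row_form_nondegenerate.
- by move=> u v z; rewrite /row_form /row_product !v2rK.
Qed.

Lemma row_symplectic_form mul w :
  symplectic_form mul w -> symplectic_form (row_product mul) (row_form w).
Proof.
case=> hw w_skew w_nd w_cyc; split; first exact: row_form_bilinear.
- by move=> u v; apply: w_skew.
- exact: row_form_nondegenerate.
- by move=> u v z; rewrite /row_form /row_product !v2rK.
Qed.

Lemma mem_mx2vs m (M : 'M_(m, dim V)) x : (x \in mx2vs M) = (v2r x <= M)%MS.
Proof. by rewrite [x \in _]unfold_in /= /vline /= !genmxE. Qed.

Lemma mx2vs_direct_sum (M N : 'M_(dim V)) :
  (M + N :=: 1%:M)%MS -> (M :&: N)%MS = 0 -> vs_direct_sum (mx2vs M) (mx2vs N).
Proof.
move=> MN1 MN0; split; apply/vspaceP => x.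
  have /sub_addsmxP[[a b] /= xab] : (v2r x <= M + N)%MS by rewrite MN1 submx1.
  rewrite memvf -[x]v2rK xab linearD /=.
  by apply: memv_add; rewrite mem_mx2vs r2vK submxMl.
rewrite memv_cap memv0 !mem_mx2vs -sub_capmx MN0 submx0.
by rewrite -(inj_eq (@v2r_inj _ V)) linear0.
Qed.

Lemma mx2vs_isotropic_subalgebra mul B w (M : 'M_(dim V)) :
  isotropic_subalgebra_mx (row_product mul) (row_form B) (row_form w) M ->
  [/\ subalgebra mul (mx2vs M), totally_isotropic B (mx2vs M) &
      totally_isotropic w (mx2vs M)].
Proof.
move=> isoM; split=> x y; rewrite !mem_mx2vs => xM yM; have [] := isoM _ _ xM yM.
- by rewrite /row_product !v2rK.
- by rewrite /row_form !v2rK.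
- by rewrite /row_form !v2rK.
Qed.

End RowCoordinates.

Theorem mainTheorem11 (K : closedFieldType) (V : vectType K)
  (mul : V -> V -> V) (B w : V -> V -> K) :
  [pchar K] =i pred0 ->
  jordan_algebra mul ->
  pseudo_euclidean mul B ->
  symplectic_form mul w ->
  exists U W : {vspace V}, symplectic_jordan_manin mul B w U W.
Proof.
move=> char0 Jmul Bpe wsy; have [mul_bil mulC _] := Jmul.
have [MU [MW [sumUW capUW isoU isoW]]] := commutative_symplectic_split_mx char0
  (row_product_bilinear mul_bil) (fun u v => congr1 _ (mulC _ _))
  (row_pseudo_euclidean Bpe) (row_symplectic_form wsy).
exists (mx2vs MU), (mx2vs MW).
have [subU BU wU] := mx2vs_isotropic_subalgebra isoU.
have [subW BW wW] := mx2vs_isotropic_subalgebra isoW.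
by split=> //; split=> //; apply: mx2vs_direct_sum.
Qed.
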